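(* Let $M\ge2$, $a_1,\dots,a_{M-1}\in\mathbb{C}$, let $\epsilon=1/\eta$ be a small complex parameter varying in a punctured neighborhood $V^*$ of $0$, and let $K\subset\mathbb{C}\setminus\{0\}$ be compact. Then the Euler–Cauchy equation $$z^Mv^{(M)}(z,\eta)+\sum_{k=1}^{M-1}a_kz^kv^{(k)}(z,\eta)-\eta^Mv(z,\eta)=0$$ has $M$ linearly independent WKB-solutions of the form $\psi_j=\exp\big[\sum_{k=0}^{\infty}h_{j,k}\epsilon^{k-1}\ln z\big]$, $\epsilon\in V^*$, $j=1,\dots,M$, where $h_{j,0}$ are the $M$ distinct $M$-th roots of $1$ and $h_{j,k}\in\mathbb{C}$, and the series $\sum_k h_{j,k}\epsilon^{k-1}$ converge, so that $\psi_j$ are convergent for all $z\in K$ and $\epsilon$ in a punctured neighborhood of $0$.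
   Context: For this operator ($\rho_M=z^M$) the relevant domain is $\Omega=\mathbb{C}\setminus\{0\}$; $\ln z$ denotes a branch of the logarithm. *)

From Stdlib Require Import Reals.
From Coquelicot Require Import Coquelicot.
Open Scope C_scope.

Definition cexp (z : C) : C :=
  (exp (Re z) * cos (Im z), exp (Re z) * sin (Im z))%R.

Definition cderiv (f : C -> C) (z l : C) : Prop :=
  @is_derive C_AbsRing C_NormedModule f z l.

Definition log_branch (U : C -> Prop) (L : C -> C) : Prop :=
  forall z, U z -> cexp (L z) = z /\ cderiv L z (/ z).

Definition derivs_on (U : C -> Prop) (n : nat) (f : C -> C) (D : nat -> C -> C) : Prop :=
  (forall z, U z -> D 0%nat z = f z) /\
  (forall k z, (k < n)%nat -> U z -> cderiv (D k) z (D (S k) z)).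

Definition euler_cauchy (M : nat) (a : nat -> C) (eta : C) (D : nat -> C -> C) (z : C) : C :=
  pow_n z M * D M z
  + sum_n_m (fun k => a k * pow_n z k * D k z) 1 (M - 1)
  - pow_n eta M * D 0%nat z.

(* For every [l], [z^l = exp (l ln z)] satisfies [z^k (d/dz)^k z^l = [l]_k z^l] with
   the falling factorial [[l]_k = l (l - 1) ... (l - k + 1)], so it solves the
   Euler-Cauchy equation exactly when [l] is a root of the indicial equation
   [[l]_M + sum_k a_k [l]_k = eta^M]. Writing [l = om (1 + eps w) / eps] with
   [om^M = 1], multiplying by [eps^M], subtracting [1] and dividing by [eps] turns
   it into a fixed-point equation [w = Phi(w, eps)] for a polynomial [Phi] in
   which [w] only occurs multiplied by [eps]. Such an equation has a unique formal
   power-series solution [w(eps)], which converges near [0]: for small [r] the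
   real majorant of [Phi] maps some bound [B] for [sum_k |w_k| r^k] below itself.
   The [h_(j, k)] are the coefficients of [eps l_j = om_j (1 + eps w_j(eps))].
   For small [eps] the [l_j] are distinct since the [om_j] are, and exponentials
   [exp (l_j ln z)] with distinct [l_j] are linearly independent: differentiating
   a vanishing combination gives a Vandermonde system. *)

From Stdlib Require Import Reals Lra Lia.
From Coquelicot Require Import Coquelicot.
Open Scope C_scope.

(* Coquelicot's [pow_n], [sum_n], [scal] compute with the generic [mult], [plus],
   [one], [zero]; [ring] and [field] need them as operations on [C]. *)
Ltac C_unfold :=
  repeat change (@mult C_Ring ?x ?y) with (Cmult x y);
  repeat change (@one C_Ring) with (RtoC 1);
  repeat change (@plus C_AbelianMonoid ?x ?y) with (Cplus x y);
  repeat change (@zero C_AbelianMonoid) with (RtoC 0);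
  try match goal with |- ?a = ?b => change (@eq C a b) end.

Lemma Cmult_integral (a b : C) : a * b = 0 -> a = 0 \/ b = 0.
Proof.
  intros Hab. destruct (Ceq_dec b 0) as [Hb | Hb]; auto. left.
  replace a with (a * b * / b) by (field; exact Hb). rewrite Hab. ring.
Qed.

Lemma pow_n_Cmult (a b : C) n : pow_n (a * b) n = pow_n a n * pow_n b n.
Proof. induction n as [|n IH]; simpl; C_unfold; [ring | rewrite IH; ring]. Qed.

Lemma pow_n_neq0 (z : C) n : z <> 0 -> pow_n z n <> RtoC 0.
Proof.
  intros Hz. induction n as [|n IH]; simpl; C_unfold.
  - intros H. injection H as H. lra.
  - intros H. apply Cmult_integral in H as [H | H]; auto.
Qed.

Lemma pow_n_Cinv (z : C) n : z <> 0 -> pow_n (/ z) n = / pow_n z n.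
Proof.
  intros Hz. induction n as [|n IH]; simpl; C_unfold; [field|].
  rewrite IH. field. split; [apply pow_n_neq0, Hz | exact Hz].
Qed.

Lemma Cmod_pow_n (z : C) n : Cmod (pow_n z n) = (Cmod z ^ n)%R.
Proof.
  induction n as [|n IH]; simpl; [apply Cmod_1|].
  change (mult z (pow_n z n)) with (z * pow_n z n). rewrite Cmod_mult, IH. reflexivity.
Qed.

Lemma Cmod_sum_n (f : nat -> C) n :
  (Cmod (sum_n f n) <= sum_n (fun k => Cmod (f k)) n)%R.
Proof.
  induction n as [|n IH]; rewrite !sum_O || rewrite !sum_Sn; [lra|].
  eapply Rle_trans; [apply Cmod_triangle|]. change (plus ?a ?b) with (a + b)%R. lra.
Qed.

(* [csum f n] has [n] terms, whereas [sum_n f n] has [n + 1]. *)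
Fixpoint csum (f : nat -> C) (n : nat) : C :=
  match n with O => 0 | S n => csum f n + f n end.

Lemma csum_ext f g n : (forall k, (k < n)%nat -> f k = g k) -> csum f n = csum g n.
Proof. induction n as [|n IH]; simpl; intros H; auto. rewrite IH, H; auto. Qed.

Lemma csum_mult_l c f n : c * csum f n = csum (fun k => c * f k) n.
Proof. induction n as [|n IH]; simpl; [ring|]. rewrite <- IH. ring. Qed.

Lemma csum_minus f g n : csum (fun k => f k - g k) n = csum f n - csum g n.
Proof. induction n as [|n IH]; simpl; [ring|]. rewrite IH. ring. Qed.

Lemma csum_const0 n : csum (fun _ => 0) n = 0.
Proof. induction n as [|n IH]; simpl; [reflexivity|]. rewrite IH. ring. Qed.

Lemma sum_n_csum (f : nat -> C) n : sum_n f n = csum f (S n).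
Proof.
  induction n as [|n IH]; [rewrite sum_O; simpl; ring|].
  rewrite sum_Sn, IH. reflexivity.
Qed.

Lemma sum_n_m_csum (f : nat -> C) n : (1 <= n)%nat ->
  sum_n_m f 1 (n - 1) = csum (fun k => match k with O => 0 | _ => f k end) n.
Proof.
  intros Hn. destruct n as [|n]; [lia|]. replace (S n - 1)%nat with n by lia. clear Hn.
  induction n as [|n IH].
  - rewrite sum_n_m_zero by lia. simpl. C_unfold. ring.
  - rewrite sum_n_Sm by lia. rewrite IH. reflexivity.
Qed.

Lemma is_derive_csum (f : nat -> C -> C) (df : nat -> C) (z : C) n :
  (forall j, (j < n)%nat -> cderiv (f j) z (df j)) ->
  cderiv (fun t => csum (fun j => f j t) n) z (csum df n).
Proof.
  induction n as [|n IH]; intros H; simpl.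
  - apply (is_derive_const (K := C_AbsRing) (V := C_NormedModule) (RtoC 0)).
  - apply (is_derive_plus (K := C_AbsRing) (V := C_NormedModule)).
    + apply IH. intros j Hj. apply H. lia.
    + apply H. lia.
Qed.

Lemma Re_sum_n (a : nat -> C) n : Re (sum_n a n) = sum_n (fun k => Re (a k)) n.
Proof. induction n as [|n IH]; rewrite !sum_O || rewrite !sum_Sn, <- IH; reflexivity. Qed.

Lemma Im_sum_n (a : nat -> C) n : Im (sum_n a n) = sum_n (fun k => Im (a k)) n.
Proof. induction n as [|n IH]; rewrite !sum_O || rewrite !sum_Sn, <- IH; reflexivity. Qed.

Lemma is_series_C_split (a : nat -> C) (l : C) :
  is_series a l <->
  is_series (fun n => Re (a n)) (Re l) /\ is_series (fun n => Im (a n)) (Im l).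
Proof.
  unfold is_series. split.
  - intros H. pose proof (proj1 (filterlim_locally (F := eventually) (sum_n a) l) H) as Hl.
    split; apply filterlim_locally; intros eps; generalize (Hl eps); apply filter_imp;
      intros n [HRe HIm]; [rewrite Re_sum_n in HRe | rewrite Im_sum_n in HIm]; assumption.
  - intros [HRe HIm]. apply (filterlim_locally (F := eventually) (sum_n a) l). intros eps.
    pose proof (proj1 (filterlim_locally (F := eventually) _ (Re l)) HRe eps) as H1.
    pose proof (proj1 (filterlim_locally (F := eventually) _ (Im l)) HIm eps) as H2.
    generalize (filter_and _ _ H1 H2). apply filter_imp. intros n [Hn1 Hn2]. split.
    + change (ball (Re l) eps (Re (sum_n a n))). rewrite Re_sum_n. exact Hn1.
    + change (ball (Im l) eps (Im (sum_n a n))). rewrite Im_sum_n. exact Hn2.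
Qed.

Lemma ex_series_Re_Im (u : nat -> C) : ex_series (fun n => Cmod (u n)) ->
  ex_series (fun n => Rabs (Re (u n))) /\ ex_series (fun n => Rabs (Im (u n))).
Proof.
  intros H. split; refine (ex_series_le (K := R_AbsRing) (V := R_CompleteNormedModule) _ _ _ H);
    intros n; change (norm ?x) with (Rabs x); rewrite Rabs_Rabsolu;
    (eapply Rle_trans; [|apply Rmax_Cmod]); [apply Rmax_l | apply Rmax_r].
Qed.

(* Mertens' theorem, from the real one applied to real and imaginary parts. *)
Lemma is_series_C_mult (u v : nat -> C) (U V : C) :
  is_series u U -> is_series v V ->
  ex_series (fun n => Cmod (u n)) -> ex_series (fun n => Cmod (v n)) ->
  is_series (fun n => sum_n (fun k => u k * v (n - k)%nat) n) (U * V).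
Proof.
  intros HU HV AU AV.
  apply is_series_C_split in HU as [HU1 HU2], HV as [HV1 HV2].
  destruct (ex_series_Re_Im _ AU) as [AU1 AU2], (ex_series_Re_Im _ AV) as [AV1 AV2].
  apply is_series_C_split. split.
  - pose proof (is_series_minus _ _ _ _ (is_series_mult _ _ _ _ HU1 HV1 AU1 AV1)
      (is_series_mult _ _ _ _ HU2 HV2 AU2 AV2)) as HM.
    replace (Re (U * V)) with (minus (Re U * Re V)%R (Im U * Im V)%R)
      by (destruct U, V; unfold minus, plus, opp; simpl; ring).
    eapply is_series_ext; [|exact HM]. intros n.
    rewrite Re_sum_n, sum_n_Reals. unfold minus, plus, opp. simpl.
    change (?a + - ?b)%R with (a - b)%R. rewrite <- minus_sum.
    apply sum_eq. intros k _. reflexivity.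
  - pose proof (is_series_plus _ _ _ _ (is_series_mult _ _ _ _ HU1 HV2 AU1 AV2)
      (is_series_mult _ _ _ _ HU2 HV1 AU2 AV1)) as HM.
    replace (Im (U * V)) with (plus (Re U * Im V)%R (Im U * Re V)%R)
      by (destruct U, V; unfold plus; simpl; ring).
    eapply is_series_ext; [|exact HM]. intros n.
    rewrite Im_sum_n, sum_n_Reals. unfold plus. simpl. rewrite <- plus_sum.
    apply sum_eq. intros k _. reflexivity.
Qed.

Definition Cseries (u : nat -> C) : C :=
  (Series (fun n => Re (u n)), Series (fun n => Im (u n))).

Lemma Cseries_unique u l : is_series u l -> Cseries u = l.
Proof.
  intros H. apply is_series_C_split in H as [H1 H2]. unfold Cseries.
  rewrite (is_series_unique _ _ H1), (is_series_unique _ _ H2). destruct l; reflexivity.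
Qed.

Lemma is_series_Cmod_le (u : nat -> C) (l : C) (B : R) : is_series u l ->
  (forall n, Cmod (sum_n u n) <= B)%R -> (Cmod l <= B)%R.
Proof.
  intros Hu Hb.
  assert (Hl : is_lim_seq (fun n => Cmod (sum_n u n)) (Cmod l))
    by exact (filterlim_comp _ _ _ _ _ _ _ _ Hu (filterlim_norm l)).
  exact (is_lim_seq_le _ (fun _ => B) _ _ Hb Hl (is_lim_seq_const B)).
Qed.

(* A [pexpr] is a polynomial in a variable [w] and a parameter [eps] with complex
   coefficients. It is read as a complex number ([peval]), as the operation it
   induces on formal power series in [eps] substituted for [w] ([pser]), and as a
   real majorant of that operation ([pmaj]). *)
Inductive pexpr : Type :=
  | PVar
  | PCst (c : C)
  | PAdd (p q : pexpr)
  | PMul (p q : pexpr)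
  | PEps (p : pexpr).

Fixpoint peval (p : pexpr) (w z : C) : C :=
  match p with
  | PVar => w
  | PCst c => c
  | PAdd p q => peval p w z + peval q w z
  | PMul p q => peval p w z * peval q w z
  | PEps p => z * peval p w z
  end.

Definition seq_cst (c : C) (k : nat) : C := match k with O => c | _ => 0 end.
Definition seq_shift (a : nat -> C) (k : nat) : C := match k with O => 0 | S k => a k end.
Definition seq_mul (a b : nat -> C) (k : nat) : C := sum_n (fun i => a i * b (k - i)%nat) k.

Fixpoint pser (p : pexpr) (a : nat -> C) : nat -> C :=
  match p with
  | PVar => a
  | PCst c => seq_cst c
  | PAdd p q => fun k => pser p a k + pser q a k
  | PMul p q => seq_mul (pser p a) (pser q a)
  | PEps p => seq_shift (pser p a)
  end.

Fixpoint pmaj (p : pexpr) (N r : R) : R :=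
  match p with
  | PVar => N
  | PCst c => Cmod c
  | PAdd p q => pmaj p N r + pmaj q N r
  | PMul p q => pmaj p N r * pmaj q N r
  | PEps p => r * pmaj p N r
  end.

(* [w] occurs only under a factor [eps], so the fixed-point equation
   [w = p(w, eps)] determines the coefficients of a power-series solution one
   after the other. *)
Fixpoint eps_guarded (p : pexpr) : Prop :=
  match p with
  | PVar => False
  | PCst _ | PEps _ => True
  | PAdd p q | PMul p q => eps_guarded p /\ eps_guarded q
  end.

Lemma pser_causal p a b k : (forall i, (i <= k)%nat -> a i = b i) ->
  forall i, (i <= k)%nat -> pser p a i = pser p b i.
Proof.
  revert a b k. induction p as [| c | p IHp q IHq | p IHp q IHq | p IHp];
    intros a b k Hab i Hi; simpl; auto.
  - rewrite (IHp a b k), (IHq a b k); auto.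
  - apply sum_n_ext_loc. intros j Hj. rewrite (IHp a b k), (IHq a b k); auto; lia.
  - destruct i as [|i]; simpl; auto. apply (IHp a b k); auto; lia.
Qed.

Lemma pser_guarded_causal p : eps_guarded p -> forall a b k,
  (forall i, (i < k)%nat -> a i = b i) ->
  forall i, (i <= k)%nat -> pser p a i = pser p b i.
Proof.
  induction p as [| c | p IHp q IHq | p IHp q IHq | p IHp];
    intros Hg a b k Hab i Hi; simpl in *; try tauto.
  - destruct Hg as [Hp Hq]. rewrite (IHp Hp a b k), (IHq Hq a b k); auto.
  - destruct Hg as [Hp Hq]. apply sum_n_ext_loc. intros j Hj.
    rewrite (IHp Hp a b k), (IHq Hq a b k); auto; lia.
  - destruct i as [|i]; simpl; auto.
    apply (pser_causal p a b i); auto. intros j Hj. apply Hab. lia.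
Qed.

Fixpoint pser_iter (p : pexpr) (n : nat) : nat -> C :=
  match n with O => fun _ => 0 | S n => pser p (pser_iter p n) end.

(* For a guarded [p] the [k]-th coefficient of the iterates is frozen from the
   [(k + 1)]-st iterate on; [pfix p] collects these limits. *)
Definition pfix (p : pexpr) (k : nat) : C := pser_iter p (S k) k.

Lemma pser_iter_S p : eps_guarded p ->
  forall n i, (i < n)%nat -> pser_iter p (S n) i = pser_iter p n i.
Proof.
  intros Hg n. induction n as [|n IH]; intros i Hi; [lia|].
  apply (pser_guarded_causal p Hg _ _ i); [|lia]. intros j Hj. apply IH. lia.
Qed.

Lemma pser_iter_stable p : eps_guarded p ->
  forall n m i, (i < n)%nat -> (n <= m)%nat -> pser_iter p m i = pser_iter p n i.
Proof.
  intros Hg n m i Hi Hm. induction Hm as [|m Hm IH]; auto.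
  rewrite pser_iter_S; auto. lia.
Qed.

Lemma pfix_iter p : eps_guarded p ->
  forall m i, (i < m)%nat -> pfix p i = pser_iter p m i.
Proof. intros Hg m i Hi. unfold pfix. symmetry. apply pser_iter_stable; auto. Qed.

Lemma pser_pfix p : eps_guarded p -> forall k, pser p (pfix p) k = pfix p k.
Proof.
  intros Hg k.
  rewrite (pser_guarded_causal p Hg (pfix p) (pser_iter p (S k)) k).
  - symmetry. exact (pfix_iter p Hg (S (S k)) k ltac:(lia)).
  - intros i Hi. apply pfix_iter; auto. lia.
Qed.

Definition abs_term (r : R) (a : nat -> C) (k : nat) : R := (Cmod (a k) * r ^ k)%R.

Definition pseries_abs_le (r : R) (a : nat -> C) (B : R) : Prop :=
  ex_series (abs_term r a) /\ (Series (abs_term r a) <= B)%R.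

Lemma abs_term_ge0 r a k : (0 <= r)%R -> (0 <= abs_term r a k)%R.
Proof. intros Hr. apply Rmult_le_pos; [apply Cmod_ge_0 | apply pow_le, Hr]. Qed.

Lemma sum_n_le_Series (a : nat -> R) : (forall n, 0 <= a n)%R -> ex_series a ->
  forall n, (sum_n a n <= Series a)%R.
Proof.
  intros Ha Hex n. apply (is_lim_seq_incr_compare (sum_n a)); [apply Series_correct, Hex|].
  intros m. rewrite sum_Sn. unfold plus; simpl. specialize (Ha (S m)). lra.
Qed.

Lemma ex_series_bounded (a : nat -> R) (B : R) : (forall n, 0 <= a n)%R ->
  (forall n, sum_n a n <= B)%R -> ex_series a /\ (Series a <= B)%R.
Proof.
  intros Ha Hb.
  destruct (ex_finite_lim_seq_incr (sum_n a) B) as [l Hl]; auto.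
  { intros m. rewrite sum_Sn. unfold plus; simpl. specialize (Ha (S m)). lra. }
  split; [exists l; exact Hl|].
  rewrite (is_series_unique _ _ Hl).
  exact (is_lim_seq_le (sum_n a) (fun _ => B) l B Hb Hl (is_lim_seq_const B)).
Qed.

Lemma Series_abs_term_ge0 r a : (0 <= r)%R -> ex_series (abs_term r a) ->
  (0 <= Series (abs_term r a))%R.
Proof.
  intros Hr Ha. pose proof (sum_n_le_Series _ (fun k => abs_term_ge0 r a k Hr) Ha 0) as H0.
  rewrite sum_O in H0. pose proof (abs_term_ge0 r a 0 Hr). lra.
Qed.

Lemma is_series_first {K : AbsRing} {V : NormedModule K} (x : V) :
  is_series (fun k => match k with O => x | _ => zero end) x.
Proof.
  apply (filterlim_ext (fun _ => x)); [|apply filterlim_const].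
  intros n. induction n as [|n IH]; [rewrite sum_O; reflexivity|].
  rewrite sum_Sn, <- IH, plus_zero_r. reflexivity.
Qed.

Lemma pseries_abs_le_cst r c : pseries_abs_le r (seq_cst c) (Cmod c).
Proof.
  assert (Hs : is_series (abs_term r (seq_cst c)) (Cmod c)).
  { eapply is_series_ext; [|apply (is_series_first (V := R_NormedModule) (Cmod c))].
    intros [|k]; unfold abs_term; simpl; [ring|]. rewrite Cmod_0. symmetry. apply Rmult_0_l. }
  split; [exists (Cmod c); exact Hs|]. rewrite (is_series_unique _ _ Hs). lra.
Qed.

Lemma pseries_abs_le_add r a b A B : (0 <= r)%R ->
  pseries_abs_le r a A -> pseries_abs_le r b B ->
  pseries_abs_le r (fun k => a k + b k) (A + B).
Proof.
  intros Hr [[lA HA] BA] [[lB HB] BB].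
  pose proof (is_series_plus _ _ _ _ HA HB) as HAB.
  assert (Hle : forall n, (0 <= abs_term r (fun k => (a k + b k)%C) n
                           <= plus (abs_term r a n) (abs_term r b n))%R).
  { intros n. split; [apply abs_term_ge0, Hr|]. unfold abs_term, plus. simpl.
    rewrite <- Rmult_plus_distr_r.
    apply Rmult_le_compat_r; [apply pow_le, Hr | apply Cmod_triangle]. }
  split.
  - refine (ex_series_le (K := R_AbsRing) (V := R_CompleteNormedModule) _ _ _ (ex_intro _ _ HAB)).
    intros n. change (norm ?x) with (Rabs x). rewrite Rabs_pos_eq; apply Hle.
  - eapply Rle_trans; [apply Series_le; [exact Hle | exists (plus lA lB); exact HAB]|].
    rewrite (is_series_unique _ _ HA) in BA. rewrite (is_series_unique _ _ HB) in BB.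
    erewrite is_series_unique; [|exact HAB]. unfold plus. simpl. lra.
Qed.

Lemma pseries_abs_le_mul r a b A B : (0 <= r)%R ->
  pseries_abs_le r a A -> pseries_abs_le r b B ->
  pseries_abs_le r (seq_mul a b) (A * B).
Proof.
  intros Hr [EA BA] [EB BB].
  pose proof (is_series_mult_pos _ _ _ _ (Series_correct _ EA) (Series_correct _ EB)
    (fun k => abs_term_ge0 r a k Hr) (fun k => abs_term_ge0 r b k Hr)) as HM.
  assert (Hle : forall n, (0 <= abs_term r (seq_mul a b) n
                           <= sum_f_R0 (fun k => abs_term r a k * abs_term r b (n - k)%nat) n)%R).
  { intros n. split; [apply abs_term_ge0, Hr|].
    unfold abs_term at 1, seq_mul. eapply Rle_trans.
    { apply Rmult_le_compat_r; [apply pow_le, Hr | apply Cmod_sum_n]. }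
    rewrite sum_n_Reals, Rmult_comm, scal_sum. apply Req_le. apply sum_eq. intros k Hk.
    unfold abs_term. rewrite Cmod_mult.
    replace (r ^ n)%R with (r ^ k * r ^ (n - k))%R by (rewrite <- pow_add; f_equal; lia).
    ring. }
  split.
  - refine (ex_series_le (K := R_AbsRing) (V := R_CompleteNormedModule) _ _ _ (ex_intro _ _ HM)).
    intros n. change (norm ?x) with (Rabs x). rewrite Rabs_pos_eq; apply Hle.
  - eapply Rle_trans; [apply Series_le; [exact Hle | eexists; exact HM]|].
    rewrite (is_series_unique _ _ HM).
    apply Rmult_le_compat; try assumption; apply Series_abs_term_ge0; assumption.
Qed.

Lemma pseries_abs_le_shift r a B : (0 <= r)%R ->
  pseries_abs_le r a B -> pseries_abs_le r (seq_shift a) (r * B).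
Proof.
  intros Hr [EA BA].
  assert (Hs : is_series (abs_term r (seq_shift a)) (r * Series (abs_term r a))%R).
  { apply is_series_decr_1.
    replace (abs_term r (seq_shift a) 0) with 0%R
      by (unfold abs_term; simpl; rewrite Cmod_0; ring).
    change (opp 0%R) with (- 0)%R. change (plus ?x ?y) with (x + y)%R. rewrite Ropp_0, Rplus_0_r.
    eapply is_series_ext; [|apply (is_series_scal_l (K := R_AbsRing) r _ _ (Series_correct _ EA))].
    intros n. unfold abs_term, scal. simpl. unfold mult. simpl. ring. }
  split; [eexists; exact Hs|]. rewrite (is_series_unique _ _ Hs).
  apply Rmult_le_compat_l; assumption.
Qed.

Lemma pser_majorant p r a N : (0 <= r)%R ->
  pseries_abs_le r a N -> pseries_abs_le r (pser p a) (pmaj p N r).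
Proof.
  intros Hr Ha. induction p; simpl.
  - exact Ha.
  - apply pseries_abs_le_cst.
  - apply pseries_abs_le_add; assumption.
  - apply pseries_abs_le_mul; assumption.
  - apply pseries_abs_le_shift; assumption.
Qed.

Lemma pseries_abs_le_Cmod (a : nat -> C) (z : C) (B : R) :
  pseries_abs_le (Cmod z) a B -> ex_series (fun k => Cmod (scal (pow_n z k) (a k))).
Proof.
  intros [Ha _]. eapply ex_series_ext; [|exact Ha]. intros n. unfold abs_term.
  change (scal (pow_n z n) (a n)) with (pow_n z n * a n).
  rewrite Cmod_mult, Cmod_pow_n. apply Rmult_comm.
Qed.

Lemma pser_pseries p a z W N : pseries_abs_le (Cmod z) a N -> is_pseries a z W ->
  is_pseries (pser p a) z (peval p W z).
Proof.
  intros Ha HW. induction p as [| c | p IHp q IHq | p IHp q IHq | p IHp]; simpl.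
  - exact HW.
  - eapply is_series_ext; [|apply (is_series_first (V := C_NormedModule) c)].
    intros [|k]; simpl.
    + symmetry. apply scal_one.
    + change (scal ?x ?y) with (x * y). symmetry. apply Cmult_0_r.
  - apply (is_pseries_plus _ _ _ _ _ IHp IHq).
  - pose proof (pseries_abs_le_Cmod _ z _ (pser_majorant p _ a N (Cmod_ge_0 z) Ha)) as Ap.
    pose proof (pseries_abs_le_Cmod _ z _ (pser_majorant q _ a N (Cmod_ge_0 z) Ha)) as Aq.
    eapply is_series_ext; [|exact (is_series_C_mult _ _ _ _ IHp IHq Ap Aq)].
    intros n. unfold seq_mul. change (scal (pow_n z n) ?b) with (pow_n z n * b).
    rewrite <- (sum_n_mult_l (K := C_Ring)). apply sum_n_ext_loc. intros k Hk.
    change (scal (pow_n z ?m) ?b) with (pow_n z m * b).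
    replace (pow_n z n) with (pow_n z k * pow_n z (n - k)%nat)
      by (rewrite <- (pow_n_plus (K := C_Ring)); f_equal; lia).
    C_unfold. ring.
  - eapply is_pseries_ext; [|apply (is_pseries_incr_1 _ _ _ IHp)].
    intros [|n]; reflexivity.
Qed.

Lemma pmaj_ge0 p N r : (0 <= N)%R -> (0 <= r)%R -> (0 <= pmaj p N r)%R.
Proof.
  intros HN Hr. induction p; simpl;
    auto using Cmod_ge_0, Rplus_le_le_0_compat, Rmult_le_pos.
Qed.

Lemma pmaj_guarded_0 p : eps_guarded p -> forall N N', pmaj p N 0 = pmaj p N' 0.
Proof.
  induction p as [| c | p IHp q IHq | p IHp q IHq | p IHp]; simpl; intros Hg N N'; try tauto.
  - destruct Hg as [Hp Hq]. rewrite (IHp Hp N N'), (IHq Hq N N'). reflexivity.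
  - destruct Hg as [Hp Hq]. rewrite (IHp Hp N N'), (IHq Hq N N'). reflexivity.
  - ring.
Qed.

Lemma pmaj_le_affine p N : (0 <= N)%R -> exists K, (0 <= K)%R /\
  forall r, (0 <= r <= 1)%R -> (pmaj p N r <= pmaj p N 0 + r * K)%R.
Proof.
  intros HN. induction p as [| c | p IHp q IHq | p IHp q IHq | p IHp]; simpl.
  - exists 0%R. split; intros; lra.
  - exists 0%R. split; intros; lra.
  - destruct IHp as [Kp [HKp Hp]], IHq as [Kq [HKq Hq]].
    exists (Kp + Kq)%R. split; [lra|]. intros r Hr.
    specialize (Hp r Hr). specialize (Hq r Hr). nra.
  - destruct IHp as [Kp [HKp Hp]], IHq as [Kq [HKq Hq]].
    pose proof (pmaj_ge0 p N 0 HN (Rle_refl 0)). pose proof (pmaj_ge0 q N 0 HN (Rle_refl 0)).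
    exists (pmaj p N 0 * Kq + Kp * pmaj q N 0 + Kp * Kq)%R. split; [nra|]. intros r Hr.
    pose proof (pmaj_ge0 p N r HN (proj1 Hr)). pose proof (pmaj_ge0 q N r HN (proj1 Hr)).
    specialize (Hp r Hr). specialize (Hq r Hr).
    apply Rle_trans with ((pmaj p N 0 + r * Kp) * (pmaj q N 0 + r * Kq))%R;
      [apply Rmult_le_compat; assumption|].
    assert (r * r * (Kp * Kq) <= r * (Kp * Kq))%R by (apply Rmult_le_compat_r; nra).
    nra.
  - destruct IHp as [K [HK Hp]].
    pose proof (pmaj_ge0 p N 0 HN (Rle_refl 0)).
    exists (pmaj p N 0 + K)%R. split; [lra|]. intros r Hr.
    specialize (Hp r Hr).
    assert (r * pmaj p N r <= r * (pmaj p N 0 + K))%R by (apply Rmult_le_compat_l; nra).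
    lra.
Qed.

Lemma pseries_abs_le_zero r : pseries_abs_le r (fun _ => 0) 0.
Proof.
  assert (Hs : is_series (abs_term r (fun _ => 0)) 0%R).
  { eapply is_series_ext; [|apply (is_series_first (V := R_NormedModule) 0%R)].
    intros [|k]; unfold abs_term; rewrite Cmod_0; simpl; [ring | symmetry; apply Rmult_0_l]. }
  split; [exists 0%R; exact Hs|]. rewrite (is_series_unique _ _ Hs). lra.
Qed.

Lemma pseries_abs_le_mono r r' a B : (0 <= r' <= r)%R ->
  pseries_abs_le r a B -> pseries_abs_le r' a B.
Proof.
  intros Hr [Ha Hb].
  assert (Hle : forall n, (0 <= abs_term r' a n <= abs_term r a n)%R).
  { intros n. split; [apply abs_term_ge0, Hr|]. unfold abs_term.
    apply Rmult_le_compat_l; [apply Cmod_ge_0 | apply pow_incr, Hr]. }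
  split.
  - refine (ex_series_le (K := R_AbsRing) (V := R_CompleteNormedModule) _ _ _ Ha).
    intros n. change (norm ?x) with (Rabs x). rewrite Rabs_pos_eq; apply Hle.
  - eapply Rle_trans; [apply Series_le; [exact Hle | exact Ha] | exact Hb].
Qed.

(* [B] bounds every iterate, hence their limit. *)
Lemma pfix_majorant_le p r B : eps_guarded p -> (0 <= r)%R -> (0 <= B)%R ->
  (pmaj p B r <= B)%R -> pseries_abs_le r (pfix p) B.
Proof.
  intros Hg Hr HB Hp.
  assert (Hiter : forall n, pseries_abs_le r (pser_iter p n) B).
  { induction n as [|n IH]; simpl.
    - eapply pseries_abs_le_mono with (r := r); [lra|].
      destruct (pseries_abs_le_zero r) as [H0 B0]. split; [exact H0 | lra].
    - destruct (pser_majorant p r _ B Hr IH) as [Hn Bn]. split; [exact Hn | lra]. }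
  apply ex_series_bounded; [intros; apply abs_term_ge0, Hr|]. intros n.
  destruct (Hiter (S n)) as [Hn Bn]. eapply Rle_trans; [|exact Bn].
  eapply Rle_trans; [|apply sum_n_le_Series; [intros; apply abs_term_ge0, Hr | exact Hn]].
  apply Req_le. apply sum_n_ext_loc. intros k Hk. unfold abs_term.
  rewrite (pfix_iter p Hg (S n) k); [reflexivity | lia].
Qed.

(* Take [B] above the value of the majorant at [r = 0] (which does not depend on
   [B]) and [r] small enough for the affine bound to stay below [B]. *)
Lemma pfix_majorant p : eps_guarded p ->
  exists r B, (0 < r)%R /\ (0 <= B)%R /\ pseries_abs_le r (pfix p) B.
Proof.
  intros Hg.
  set (B := (pmaj p 0 0 + 1)%R).
  assert (HB : (0 <= B)%R)
    by (pose proof (pmaj_ge0 p 0 0 (Rle_refl 0) (Rle_refl 0)); unfold B; lra).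
  destruct (pmaj_le_affine p B HB) as [K [HK HL]].
  set (r := (/ (K + 1))%R).
  assert (Hr : (0 < r)%R) by (apply Rinv_0_lt_compat; lra).
  assert (Hr1 : (r <= 1)%R) by (rewrite <- Rinv_1; apply Rinv_le_contravar; lra).
  assert (HrK : (r * K < 1)%R)
    by (apply (Rmult_lt_reg_l (K + 1)); [lra|]; unfold r; rewrite <- Rmult_assoc, Rinv_r; lra).
  exists r, B. split; [exact Hr|]. split; [exact HB|].
  apply pfix_majorant_le; [exact Hg | lra | exact HB |].
  specialize (HL r (conj (Rlt_le _ _ Hr) Hr1)).
  rewrite (pmaj_guarded_0 p Hg B 0) in HL. unfold B at 2. lra.
Qed.

Definition CPSeries (a : nat -> C) (z : C) : C := Cseries (fun k => scal (pow_n z k) (a k)).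

Lemma pfix_CPSeries p r B z : eps_guarded p -> pseries_abs_le r (pfix p) B ->
  (Cmod z <= r)%R ->
  is_pseries (pfix p) z (CPSeries (pfix p) z) /\
  CPSeries (pfix p) z = peval p (CPSeries (pfix p) z) z /\
  (Cmod (CPSeries (pfix p) z) <= B)%R /\
  pseries_abs_le (Cmod z) (pfix p) B.
Proof.
  intros Hg Hb Hz.
  assert (Hbz : pseries_abs_le (Cmod z) (pfix p) B)
    by (apply (pseries_abs_le_mono r); [split; [apply Cmod_ge_0 | exact Hz] | exact Hb]).
  destruct (ex_series_le (K := C_AbsRing) (V := C_CompleteNormedModule) _ _
    (fun n => Rle_refl _) (pseries_abs_le_Cmod _ _ _ Hbz)) as [W HW].
  unfold CPSeries. rewrite (Cseries_unique _ _ HW).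
  split; [exact HW|]. split; [|split; [|exact Hbz]].
  - assert (HP : is_pseries (pfix p) z (peval p W z)).
    { eapply is_pseries_ext; [|exact (pser_pseries p _ z W B Hbz HW)].
      intros k. apply pser_pfix, Hg. }
    exact (filterlim_locally_unique (F := eventually) _ _ _ HW HP).
  - apply (is_series_Cmod_le _ W B HW). intros n.
    eapply Rle_trans; [apply Cmod_sum_n|].
    destruct Hbz as [Hex HB]. eapply Rle_trans; [|exact HB].
    eapply Rle_trans;
      [|apply (sum_n_le_Series _ (fun k => abs_term_ge0 _ _ k (Cmod_ge_0 z)) Hex n)].
    apply Req_le. apply sum_n_ext. intros k. unfold abs_term.
    change (scal (pow_n z k) (pfix p k)) with (pow_n z k * pfix p k).
    rewrite Cmod_mult, Cmod_pow_n. apply Rmult_comm.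
Qed.

Lemma Rabs_sub_le_MVT (f f' : R -> R) (x K : R) :
  (forall c, derivable_pt_lim f c (f' c)) ->
  (forall c, (Rabs c <= Rabs x)%R -> (Rabs (f' c) <= K)%R) ->
  (Rabs (f x - f 0) <= K * Rabs x)%R.
Proof.
  intros Hd Hb. destruct (MVT_abs f f' 0 x) as [c [Hc Hr]]; [intros; apply Hd|].
  rewrite Hc, Rminus_0_r. apply Rmult_le_compat_r; [apply Rabs_pos|]. apply Hb.
  unfold Rmin, Rmax in Hr. destruct (Rle_dec 0 x); unfold Rabs;
    destruct (Rcase_abs c), (Rcase_abs x); lra.
Qed.

Lemma exp_le_3_of_le_1 c : (c <= 1)%R -> (exp c <= 3)%R.
Proof.
  intros H. eapply Rle_trans; [|apply exp_le_3].
  destruct (Req_dec c 1) as [-> | Hne]; [lra|]. left. apply exp_increasing. lra.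
Qed.

Lemma Rabs_sin_le x : (Rabs (sin x) <= Rabs x)%R.
Proof.
  replace (sin x) with (sin x - sin 0)%R by (rewrite sin_0; ring).
  rewrite <- (Rmult_1_l (Rabs x)). apply (Rabs_sub_le_MVT sin cos).
  - intros c. apply derivable_pt_lim_sin.
  - intros c _. pose proof (COS_bound c). unfold Rabs; destruct Rcase_abs; lra.
Qed.

Lemma Rabs_cos_sub_1_le x : (Rabs (cos x - 1) <= x ^ 2)%R.
Proof.
  replace (cos x - 1)%R with (cos x - cos 0)%R by (rewrite cos_0; ring).
  rewrite <- pow2_abs. replace (Rabs x ^ 2)%R with (Rabs x * Rabs x)%R by ring.
  apply (Rabs_sub_le_MVT cos (fun t => - sin t)%R).
  - intros c. apply derivable_pt_lim_cos.
  - intros c Hc. rewrite Rabs_Ropp. eapply Rle_trans; [apply Rabs_sin_le | exact Hc].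
Qed.

Lemma Rabs_sin_sub_le x : (Rabs x <= 1)%R -> (Rabs (sin x - x) <= x ^ 2)%R.
Proof.
  intros Hx.
  replace (sin x - x)%R with ((sin x - x) - (sin 0 - 0))%R by (rewrite sin_0; ring).
  rewrite <- pow2_abs. replace (Rabs x ^ 2)%R with (Rabs x * Rabs x)%R by ring.
  apply (Rabs_sub_le_MVT (fun t => sin t - t)%R (fun t => cos t - 1)%R).
  - intros c. apply is_derive_Reals. auto_derive; [exact I | ring].
  - intros c Hc. eapply Rle_trans; [apply Rabs_cos_sub_1_le|].
    rewrite <- pow2_abs. pose proof (Rabs_pos c). nra.
Qed.

Lemma Rabs_exp_sub_1_le x : (Rabs x <= 1)%R -> (Rabs (exp x - 1) <= 3 * Rabs x)%R.
Proof.
  intros Hx. replace (exp x - 1)%R with (exp x - exp 0)%R by (rewrite exp_0; ring).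
  apply (Rabs_sub_le_MVT exp exp); [intros; apply derivable_pt_lim_exp|].
  intros c Hc. rewrite Rabs_pos_eq by (left; apply exp_pos).
  apply exp_le_3_of_le_1. unfold Rabs in *. destruct Rcase_abs, Rcase_abs; lra.
Qed.

Lemma Rabs_exp_sub_1_sub_le x : (Rabs x <= 1)%R -> (Rabs (exp x - 1 - x) <= 3 * x ^ 2)%R.
Proof.
  intros Hx.
  replace (exp x - 1 - x)%R with ((exp x - x) - (exp 0 - 0))%R by (rewrite exp_0; ring).
  rewrite <- pow2_abs. replace (3 * Rabs x ^ 2)%R with ((3 * Rabs x) * Rabs x)%R by ring.
  apply (Rabs_sub_le_MVT (fun t => exp t - t)%R (fun t => exp t - 1)%R).
  - intros c. apply is_derive_Reals. auto_derive; [exact I | ring].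
  - intros c Hc. eapply Rle_trans; [apply Rabs_exp_sub_1_le; lra|]. pose proof (Rabs_pos c). lra.
Qed.

Lemma Cmod_le_Rabs_Re_Im (c : C) : (Cmod c <= Rabs (Re c) + Rabs (Im c))%R.
Proof.
  destruct c as [x y]. unfold Cmod, Re, Im. cbn [fst snd].
  pose proof (Rabs_pos x). pose proof (Rabs_pos y).
  rewrite <- (sqrt_Rsqr (Rabs x + Rabs y)) by lra.
  apply sqrt_le_1_alt. unfold Rsqr. rewrite <- (pow2_abs x), <- (pow2_abs y). nra.
Qed.

Lemma cexp_add x y : cexp (x + y) = cexp x * cexp y.
Proof.
  destruct x as [a b], y as [c d]. unfold cexp, Cmult, Cplus. simpl.
  rewrite exp_plus, cos_plus, sin_plus. f_equal; ring.
Qed.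

Lemma cexp_0 : cexp 0 = 1.
Proof.
  unfold cexp. simpl. rewrite exp_0, cos_0, sin_0.
  apply injective_projections; simpl; ring.
Qed.

Lemma Cmod_cexp x : Cmod (cexp x) = exp (Re x).
Proof.
  unfold cexp, Cmod. cbn [fst snd].
  replace ((exp (Re x) * cos (Im x)) ^ 2 + (exp (Re x) * sin (Im x)) ^ 2)%R
    with (exp (Re x) ^ 2)%R
    by (pose proof (sin2_cos2 (Im x)) as H; unfold Rsqr in H; nra).
  apply sqrt_pow2. left. apply exp_pos.
Qed.

Lemma cexp_neq0 x : cexp x <> 0.
Proof.
  intros H. pose proof (exp_pos (Re x)) as Hpos.
  rewrite <- Cmod_cexp, H, Cmod_0 in Hpos. lra.
Qed.

Lemma cexp_opp x : cexp (- x) = / cexp x.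
Proof.
  assert (H : cexp (- x) * cexp x = 1)
    by (rewrite <- cexp_add, <- cexp_0; f_equal; ring).
  rewrite <- (Cmult_1_l (/ cexp x)), <- H. field. apply cexp_neq0.
Qed.

Lemma cexp_nat_mul x n : pow_n (cexp x) n = cexp (RtoC (INR n) * x).
Proof.
  induction n as [|n IH]; simpl pow_n.
  - change (@one C_Ring) with (RtoC 1). rewrite <- cexp_0. f_equal. simpl. ring.
  - rewrite IH. change (mult ?a ?b) with (a * b).
    rewrite <- cexp_add. f_equal. rewrite S_INR, RtoC_plus. ring.
Qed.

Lemma cexp_sub_1_sub_le (h : C) : (Cmod h <= 1)%R ->
  (Cmod (cexp h - 1 - h) <= 12 * Cmod h ^ 2)%R.
Proof.
  intros Hh. destruct h as [a b].
  assert (Ha : (Rabs a <= Cmod (a, b))%R)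
    by (eapply Rle_trans; [apply Rmax_l | apply (Rmax_Cmod (a, b))]).
  assert (Hb : (Rabs b <= Cmod (a, b))%R)
    by (eapply Rle_trans; [apply Rmax_r | apply (Rmax_Cmod (a, b))]).
  set (t := Cmod (a, b)) in *.
  eapply Rle_trans; [apply Cmod_le_Rabs_Re_Im|]. unfold cexp. simpl.
  assert (HE : (0 < exp a <= 3)%R)
    by (split; [apply exp_pos|];
        apply exp_le_3_of_le_1; unfold Rabs in Ha; destruct Rcase_abs; lra).
  pose proof (Rabs_cos_sub_1_le b). pose proof (Rabs_sin_sub_le b ltac:(lra)).
  pose proof (Rabs_exp_sub_1_le a ltac:(lra)). pose proof (Rabs_exp_sub_1_sub_le a ltac:(lra)).
  replace (exp a * cos b + - (1) + - a)%R with (exp a * (cos b - 1) + (exp a - 1 - a))%R by ring.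
  replace (exp a * sin b + - 0 + - b)%R with (exp a * (sin b - b) + (exp a - 1) * b)%R by ring.
  pose proof (Rabs_triang (exp a * (cos b - 1)) (exp a - 1 - a)).
  pose proof (Rabs_triang (exp a * (sin b - b)) ((exp a - 1) * b)).
  rewrite !Rabs_mult, (Rabs_pos_eq (exp a)) in * by lra.
  pose proof (Rabs_pos a). pose proof (Rabs_pos b). pose proof (Rabs_pos (cos b - 1)).
  pose proof (Rabs_pos (sin b - b)). pose proof (Rabs_pos (exp a - 1)).
  assert (b ^ 2 <= t ^ 2)%R by (rewrite <- pow2_abs; nra).
  assert (a ^ 2 <= t ^ 2)%R by (rewrite <- pow2_abs; nra).
  assert (Rabs a * Rabs b <= t ^ 2)%R by nra.
  assert (Rabs (exp a - 1) * Rabs b <= 3 * Rabs a * Rabs b)%R by (apply Rmult_le_compat_r; lra).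
  assert (exp a * Rabs (cos b - 1) <= 3 * t ^ 2)%R by (apply Rmult_le_compat; lra).
  assert (exp a * Rabs (sin b - b) <= 3 * t ^ 2)%R by (apply Rmult_le_compat; lra).
  simpl in *. lra.
Qed.

Lemma cexp_derive z : cderiv cexp z (cexp z).
Proof.
  split; [apply is_linear_scal_l|].
  intros x Hx. apply (is_filter_lim_locally_unique (K := C_AbsRing)
    (V := AbsRing_NormedModule C_AbsRing)) in Hx. subst x.
  intros eps. set (c := Cmod (cexp z)).
  assert (Hc : (0 <= c)%R) by apply Cmod_ge_0.
  set (d := Rmin 1 (eps / (12 * c + 1))).
  assert (Hd : (0 < d)%R)
    by (apply Rmin_pos; [lra | apply Rdiv_lt_0_compat; [apply cond_pos | lra]]).
  exists (mkposreal d Hd). intros y Hy. change (Cmod (y - z) < d)%R in Hy.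
  change (norm ?u) with (Cmod u). repeat change (minus ?u ?v) with (u - v).
  change (scal (y - z) (cexp z)) with ((y - z) * cexp z).
  set (h := y - z) in *.
  replace (cexp y - cexp z - h * cexp z) with (cexp z * (cexp h - 1 - h))
    by (replace y with (z + h) by (unfold h; ring); rewrite cexp_add; ring).
  rewrite Cmod_mult. fold c.
  assert (Hh1 : (Cmod h <= 1)%R) by (pose proof (Rmin_l 1 (eps / (12 * c + 1))); fold d in H; lra).
  assert (Hh : (Cmod h * (12 * c + 1) <= eps)%R).
  { pose proof (Rmin_r 1 (eps / (12 * c + 1))) as Hde. fold d in Hde.
    apply (Rmult_le_reg_r (/ (12 * c + 1))); [apply Rinv_0_lt_compat; lra|].
    rewrite Rmult_assoc, Rinv_r by lra. unfold Rdiv in Hde. lra. }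
  pose proof (cexp_sub_1_sub_le h Hh1). pose proof (Cmod_ge_0 h). pose proof (cond_pos eps).
  apply Rle_trans with (c * (12 * Cmod h ^ 2))%R; [apply Rmult_le_compat_l; assumption|].
  simpl. nra.
Qed.

Lemma log_branch_neq0 U L z : log_branch U L -> U z -> z <> 0.
Proof. intros HL Hz. rewrite <- (proj1 (HL z Hz)). apply cexp_neq0. Qed.

Lemma cexp_log_sub_1 U L t mu : log_branch U L -> U t ->
  cexp ((mu - 1) * L t) = cexp (mu * L t) * / t.
Proof.
  intros HL Ht. replace ((mu - 1) * L t) with (mu * L t + - L t) by ring.
  rewrite cexp_add, cexp_opp, (proj1 (HL t Ht)). reflexivity.
Qed.

Lemma pow_n_cexp_log U L z l k : log_branch U L -> U z ->
  pow_n z k * cexp ((l - RtoC (INR k)) * L z) = cexp (l * L z).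
Proof.
  intros HL Hz. rewrite <- (proj1 (HL z Hz)) at 1.
  rewrite cexp_nat_mul, <- cexp_add. f_equal. ring.
Qed.

(* [cderiv] lives on [C_NormedModule], the chain rule on the module [C] over itself. *)
Lemma cderiv_AbsRing (f : C -> C) z l :
  cderiv f z l -> @is_derive C_AbsRing (AbsRing_NormedModule C_AbsRing) f z l.
Proof. intros [_ H]. split; [apply is_linear_scal_l | exact H]. Qed.

Lemma cexp_log_derive U L z mu c : log_branch U L -> U z ->
  cderiv (fun t => c * cexp (mu * L t)) z (c * mu * cexp ((mu - 1) * L z)).
Proof.
  intros HL Hz. unfold cderiv.
  assert (HmuL : is_derive (fun t => mu * L t) z (scal (/ z) mu)).
  { eapply is_derive_ext; [|exact (is_derive_scal_l (V := C_NormedModule) L z (/ z) mu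
                                     (cderiv_AbsRing _ _ _ (proj2 (HL z Hz))))].
    intros t. change (scal (L t) mu) with (L t * mu). apply Cmult_comm. }
  assert (Hexp : is_derive (fun t => cexp (mu * L t)) z
                   (scal (scal (/ z) mu) (cexp (mu * L z))))
    by exact (is_derive_comp cexp _ z _ _ (cexp_derive _) (cderiv_AbsRing _ _ _ HmuL)).
  replace (c * mu * cexp ((mu - 1) * L z))
    with (scal (scal (scal (/ z) mu) (cexp (mu * L z))) c).
  - eapply is_derive_ext; [|exact (is_derive_scal_l (V := C_NormedModule) _ z _ c
                                     (cderiv_AbsRing _ _ _ Hexp))].
    intros t. change (scal (cexp (mu * L t)) c) with (cexp (mu * L t) * c). apply Cmult_comm.
  - rewrite (cexp_log_sub_1 U L z mu HL Hz).
    repeat change (scal ?x ?y) with (x * y). C_unfold. ring.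
Qed.

Fixpoint falling (l : C) (k : nat) : C :=
  match k with O => 1 | S k => falling l k * (l - RtoC (INR k)) end.

(* The indicial polynomial of the Euler-Cauchy operator: [z^l] is a solution
   iff [indicial M a l = eta ^ M]. *)
Definition indicial (M : nat) (a : nat -> C) (l : C) : C :=
  falling l M + sum_n_m (fun k => a k * falling l k) 1 (M - 1).

Definition cexp_log_derivs (L : C -> C) (l : C) (k : nat) (z : C) : C :=
  falling l k * cexp ((l - RtoC (INR k)) * L z).

Lemma derivs_on_cexp_log U L l n : log_branch U L ->
  derivs_on U n (fun z => cexp (l * L z)) (cexp_log_derivs L l).
Proof.
  intros HL. split.
  - intros z _. unfold cexp_log_derivs. simpl. rewrite Cmult_1_l. f_equal. ring.
  - intros k z _ Hz. unfold cexp_log_derivs.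
    replace (falling l (S k) * cexp ((l - RtoC (INR (S k))) * L z))
      with (falling l k * (l - RtoC (INR k)) * cexp ((l - RtoC (INR k) - 1) * L z))
      by (cbn [falling]; rewrite S_INR, RtoC_plus; f_equal; f_equal; ring).
    apply (cexp_log_derive U L z (l - RtoC (INR k)) (falling l k) HL Hz).
Qed.

Lemma euler_cauchy_cexp_log U L M a eta l z : log_branch U L -> U z ->
  euler_cauchy M a eta (cexp_log_derivs L l) z
  = (indicial M a l - pow_n eta M) * cexp (l * L z).
Proof.
  intros HL Hz.
  assert (Hk : forall k, pow_n z k * cexp_log_derivs L l k z = falling l k * cexp (l * L z)).
  { intros k. unfold cexp_log_derivs. rewrite <- (pow_n_cexp_log U L z l k HL Hz). ring. }
  unfold euler_cauchy, indicial. rewrite Hk.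
  rewrite (sum_n_m_ext _ (fun k => mult (a k * falling l k) (cexp (l * L z))))
    by (intros k; rewrite <- Cmult_assoc, Hk; C_unfold; ring).
  rewrite sum_n_m_mult_r.
  assert (H0 : cexp_log_derivs L l 0 z = cexp (l * L z)).
  { unfold cexp_log_derivs. simpl. rewrite Cmult_1_l. f_equal. ring. }
  rewrite H0. C_unfold. set (S := sum_n_m _ 1 (M - 1)). ring.
Qed.

Lemma euler_cauchy_solution U L M a eta l : log_branch U L ->
  indicial M a l = pow_n eta M ->
  exists D, derivs_on U M (fun z => cexp (l * L z)) D /\
            forall z, U z -> euler_cauchy M a eta D z = 0.
Proof.
  intros HL Hl. exists (cexp_log_derivs L l). split; [apply derivs_on_cexp_log, HL|].
  intros z Hz. rewrite (euler_cauchy_cexp_log U L M a eta l z HL Hz), Hl. ring.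
Qed.

Lemma ex_common_radius (n : nat) (P : nat -> R -> Prop) :
  (forall j r r', (0 < r' <= r)%R -> P j r -> P j r') ->
  (forall j, (j < n)%nat -> exists r, (0 < r)%R /\ P j r) ->
  exists r, (0 < r)%R /\ forall j, (j < n)%nat -> P j r.
Proof.
  intros Hmono. induction n as [|n IH]; intros H.
  - exists 1%R. split; [lra | intros; lia].
  - destruct IH as [r1 [Hr1 H1]]; [intros j Hj; apply H; lia|].
    destruct (H n) as [r2 [Hr2 H2]]; [lia|].
    assert (Hr : (0 < Rmin r1 r2)%R) by (apply Rmin_pos; assumption).
    exists (Rmin r1 r2). split; [exact Hr|]. intros j Hj.
    destruct (Nat.eq_dec j n) as [-> | Hne].
    + apply (Hmono n r2); [split; [exact Hr | apply Rmin_r] | exact H2].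
    + apply (Hmono j r1); [split; [exact Hr | apply Rmin_l] | apply H1; lia].
Qed.

Definition root_unity (M j : nat) : C := cexp (0, 2 * PI * INR j / INR M)%R.

Lemma Cmod_root_unity M j : Cmod (root_unity M j) = 1%R.
Proof. unfold root_unity. rewrite Cmod_cexp. apply exp_0. Qed.

Lemma root_unity_pow M j : (0 < M)%nat -> pow_n (root_unity M j) M = RtoC 1.
Proof.
  intros HM. assert (HMr : INR M <> 0%R) by (apply not_0_INR; lia).
  unfold root_unity. rewrite cexp_nat_mul. unfold cexp, Cmult. simpl.
  replace (INR M * 0 - 0 * (2 * PI * INR j / INR M))%R with 0%R by ring.
  replace (INR M * (2 * PI * INR j / INR M) + 0 * 0)%R with (0 + 2 * INR j * PI)%R
    by (field; exact HMr).
  rewrite cos_period, sin_period, exp_0, cos_0, sin_0.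
  apply injective_projections; simpl; ring.
Qed.

Lemma cos_sin_0_2PI t : (0 < t < 2 * PI)%R -> cos t = 1%R -> sin t = 0%R -> False.
Proof.
  intros [Ht0 Ht2] Hc Hs.
  destruct (Rtotal_order t PI) as [Hl | [He | Hg]].
  - pose proof (sin_gt_0 t Ht0 Hl). lra.
  - rewrite He, cos_PI in Hc. lra.
  - pose proof (sin_lt_0 t Hg Ht2). lra.
Qed.

(* Equal roots would have arguments differing by [t] in [(0, 2 pi)], where
   [cos t = 1] and [sin t = 0] cannot hold together. *)
Lemma root_unity_inj M i j : (i < M)%nat -> (j < M)%nat ->
  root_unity M i = root_unity M j -> i = j.
Proof.
  intros Hi Hj H.
  assert (HMr : (0 < INR M)%R) by (apply lt_0_INR; lia).
  set (th := fun k => (2 * PI * INR k / INR M)%R).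
  unfold root_unity, cexp in H. simpl in H. rewrite exp_0, !Rmult_1_l in H.
  injection H as Hcos Hsin. fold (th i) (th j) in Hcos, Hsin.
  assert (Hgap : forall p q, (p < q < M)%nat -> (0 < th q - th p < 2 * PI)%R).
  { intros p q Hpq.
    replace (th q - th p)%R with (2 * PI * ((INR q - INR p) / INR M))%R
      by (unfold th; field; lra).
    assert (Hqp : (1 <= INR q - INR p)%R)
      by (rewrite <- minus_INR by lia; apply (le_INR 1); lia).
    assert (HqM : (INR q - INR p < INR M)%R)
      by (pose proof (lt_INR q M ltac:(lia)); pose proof (pos_INR p); lra).
    assert (Hfrac : (0 < (INR q - INR p) / INR M < 1)%R).
    { split; [apply Rdiv_lt_0_compat; lra|].
      apply (Rmult_lt_reg_r (INR M)); [exact HMr|].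
      unfold Rdiv. rewrite Rmult_assoc, Rinv_l by lra. lra. }
    pose proof PI_RGT_0. nra. }
  destruct (Nat.lt_total i j) as [Hl | [He | Hg]]; [exfalso | exact He | exfalso].
  - apply (cos_sin_0_2PI (th j - th i)); [apply Hgap; lia | |];
      rewrite ?cos_minus, ?sin_minus, <- Hcos, <- Hsin.
    + pose proof (sin2_cos2 (th i)). unfold Rsqr in *. lra.
    + ring.
  - apply (cos_sin_0_2PI (th i - th j)); [apply Hgap; lia | |];
      rewrite ?cos_minus, ?sin_minus, Hcos, Hsin.
    + pose proof (sin2_cos2 (th j)). unfold Rsqr in *. lra.
    + ring.
Qed.

Lemma root_unity_sep M : exists d, (0 < d)%R /\ forall i j, (i < M)%nat -> (j < M)%nat ->
  i <> j -> (d <= Cmod (root_unity M i - root_unity M j))%R.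
Proof.
  destruct (ex_common_radius M (fun i d => forall j, (j < M)%nat -> i <> j ->
              (d <= Cmod (root_unity M i - root_unity M j))%R)) as [d [Hd H]].
  - intros i r r' Hr Hp j Hj Hij. specialize (Hp j Hj Hij). lra.
  - intros i Hi.
    apply (ex_common_radius M (fun j d => i <> j ->
             (d <= Cmod (root_unity M i - root_unity M j))%R)).
    + intros j r r' Hr Hp Hij. specialize (Hp Hij). lra.
    + intros j Hj. destruct (Nat.eq_dec i j) as [-> | Hij].
      * exists 1%R. split; [lra | intros; contradiction].
      * exists (Cmod (root_unity M i - root_unity M j)). split; [|intros; lra].
        apply Cmod_gt_0. intros Heq. apply Hij, (root_unity_inj M); auto.
        apply Ceq_minus, Heq.
  - exists d. split; [exact Hd | intros i j Hi Hj; exact (H i Hi j Hj)].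
Qed.

(* Subtracting [mu n] times the [m]-th power sum from the [(m + 1)]-st one
   removes the last weight, which gives the induction step. *)
Lemma power_sums_eq0 n (w mu : nat -> C) :
  (forall i j, (i < n)%nat -> (j < n)%nat -> mu i = mu j -> i = j) ->
  (forall m, csum (fun j => w j * pow_n (mu j) m) n = 0) ->
  forall j, (j < n)%nat -> w j = 0.
Proof.
  revert w. induction n as [|n IH]; intros w Hinj Hs; [intros; lia|].
  assert (Hlow : forall j, (j < n)%nat -> w j = 0).
  { assert (Hw : forall j, (j < n)%nat -> w j * (mu j - mu n) = 0).
    { apply IH; [intros i j Hi Hj; apply Hinj; lia|]. intros m.
      transitivity (csum (fun j => w j * pow_n (mu j) (S m)) (S n)
                    - mu n * csum (fun j => w j * pow_n (mu j) m) (S n));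
        [|rewrite !Hs; ring].
      cbn [csum]. rewrite Cmult_plus_distr_l, csum_mult_l.
      replace (csum (fun j => w j * (mu j - mu n) * pow_n (mu j) m) n)
        with (csum (fun j => w j * pow_n (mu j) (S m)) n
              - csum (fun j => mu n * (w j * pow_n (mu j) m)) n)
        by (rewrite <- csum_minus; apply csum_ext; intros j _; simpl; C_unfold; ring).
      simpl pow_n. C_unfold. ring. }
    intros j Hj. destruct (Cmult_integral _ _ (Hw j Hj)) as [H | H]; [exact H|].
    apply Ceq_minus, Hinj in H; lia. }
  intros j Hj. destruct (Nat.eq_dec j n) as [-> | Hne]; [|apply Hlow; lia].
  pose proof (Hs 0%nat) as H0. cbn [csum] in H0.
  rewrite (csum_ext _ (fun _ => 0)), csum_const0 in H0
    by (intros k Hk; rewrite Hlow by exact Hk; ring).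
  simpl pow_n in H0. change (@one C_Ring) with (RtoC 1) in H0. rewrite <- H0. ring.
Qed.

Lemma cderiv_zero_on_open (U : C -> Prop) (f : C -> C) t l : open U -> U t ->
  (forall y, U y -> f y = 0) -> cderiv f t l -> l = 0.
Proof.
  intros HU Ht Hf Hd.
  assert (H0 : cderiv f t 0).
  { apply (is_derive_ext_loc (K := C_AbsRing) (V := C_NormedModule) (fun _ => RtoC 0)).
    - apply locally_C. generalize (HU t Ht). apply filter_imp.
      intros y Hy. symmetry. apply Hf, Hy.
    - apply (is_derive_const (K := C_AbsRing) (V := C_NormedModule) (RtoC 0)). }
  rewrite <- (is_C_derive_unique _ _ _ Hd). exact (is_C_derive_unique _ _ _ H0).
Qed.

(* Differentiating [sum_i c_i lam_i^m exp (lam_i L)] multiplies it by [1 / t]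
   and raises [m] by one, so all these sums vanish on [U]. *)
Lemma cexp_log_indep U L n (lam c : nat -> C) z0 :
  open U -> log_branch U L -> U z0 ->
  (forall i j, (i < n)%nat -> (j < n)%nat -> lam i = lam j -> i = j) ->
  (forall z, U z -> csum (fun j => c j * cexp (lam j * L z)) n = 0) ->
  forall j, (j < n)%nat -> c j = 0.
Proof.
  intros HU HL Hz0 Hinj Hc.
  set (g := fun m t => csum (fun i => c i * pow_n (lam i) m * cexp (lam i * L t)) n).
  assert (Hg : forall m t, U t -> g m t = 0).
  { induction m as [|m IH]; intros t Ht.
    - rewrite <- (Hc t Ht). apply csum_ext. intros i _. simpl. C_unfold. ring.
    - assert (Hd : cderiv (g m) t
                     (csum (fun i => c i * pow_n (lam i) m * lam i * cexp ((lam i - 1) * L t)) n))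
        by (apply is_derive_csum; intros i _; apply (cexp_log_derive U L); assumption).
      apply (cderiv_zero_on_open U _ t _ HU Ht IH) in Hd.
      rewrite (csum_ext _ (fun i => / t * (c i * pow_n (lam i) (S m) * cexp (lam i * L t)))),
        <- csum_mult_l in Hd
        by (intros i _; rewrite (cexp_log_sub_1 U L t (lam i) HL Ht); simpl; C_unfold; ring).
      change (/ t * g (S m) t = 0) in Hd.
      replace (g (S m) t) with (t * (/ t * g (S m) t))
        by (field; exact (log_branch_neq0 U L t HL Ht)).
      rewrite Hd. ring. }
  intros j Hj.
  assert (Hw : c j * cexp (lam j * L z0) = 0).
  { apply (power_sums_eq0 n (fun i => c i * cexp (lam i * L z0)) lam Hinj); [|exact Hj].
    intros m.
    rewrite <- (Hg m z0 Hz0). apply csum_ext. intros i _. C_unfold. ring. }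
  destruct (Cmult_integral _ _ Hw) as [H | H]; [exact H | exfalso; exact (cexp_neq0 _ H)].
Qed.

Fixpoint ppow (p : pexpr) (n : nat) : pexpr :=
  match n with O => PCst 1 | S n => PMul p (ppow p n) end.

Fixpoint psum (f : nat -> pexpr) (n : nat) : pexpr :=
  match n with O => PCst 0 | S n => PAdd (psum f n) (f n) end.

Lemma peval_ppow p n w z : peval (ppow p n) w z = pow_n (peval p w z) n.
Proof. induction n as [|n IH]; simpl; [reflexivity|]. rewrite IH. reflexivity. Qed.

Lemma peval_psum f n w z : peval (psum f n) w z = csum (fun k => peval (f k) w z) n.
Proof. induction n as [|n IH]; simpl; [reflexivity|]. rewrite IH. reflexivity. Qed.

Lemma eps_guarded_ppow p n : eps_guarded p -> eps_guarded (ppow p n).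
Proof. intros Hp. induction n; simpl; auto. Qed.

Lemma eps_guarded_psum f n : (forall k, eps_guarded (f k)) -> eps_guarded (psum f n).
Proof. intros Hf. induction n; simpl; auto. Qed.

(* With [lambda = om (1 + eps w) / eps], the following polynomials in [w] and
   [eps] are [eps lambda], [eps^k] times the falling factorial of [lambda], and
   the quotient by [eps] of the difference of the latter with [(eps lambda)^k]. *)
Definition p_eps_lambda (om : C) : pexpr := PMul (PCst om) (PAdd (PCst 1) (PEps PVar)).

Definition p_eps_lambda_sub (om : C) (k : nat) : pexpr :=
  PAdd (p_eps_lambda om) (PEps (PCst (- RtoC (INR k)))).

Fixpoint p_falling (om : C) (k : nat) : pexpr :=
  match k with O => PCst 1 | S k => PMul (p_falling om k) (p_eps_lambda_sub om k) end.

Fixpoint p_falling_rem (om : C) (k : nat) : pexpr :=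
  match k with
  | O => PCst 0
  | S k => PAdd (PMul (p_falling_rem om k) (p_eps_lambda_sub om k))
                (PMul (PCst (- RtoC (INR k))) (ppow (p_eps_lambda om) k))
  end.

Lemma peval_p_falling (om w z : C) k : z <> 0 ->
  peval (p_falling om k) w z = pow_n z k * falling (om * (1 + z * w) / z) k.
Proof.
  intros Hz. induction k as [|k IH]; simpl; [C_unfold; ring|].
  rewrite IH. C_unfold. field. exact Hz.
Qed.

Lemma peval_p_falling_rem (om w z : C) k :
  peval (p_falling om k) w z = pow_n (om * (1 + z * w)) k + z * peval (p_falling_rem om k) w z.
Proof.
  induction k as [|k IH]; simpl; [C_unfold; ring|].
  rewrite IH, peval_ppow. simpl. C_unfold. ring.
Qed.

(* [(1 + x)^M = 1 + M x + x^2 R] with [R = sum_(i < M) sum_(l < i) (1 + x)^l]. *)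
Definition p_geom2 (M : nat) : pexpr :=
  psum (fun i => psum (fun l => ppow (PAdd (PCst 1) (PEps PVar)) l) i) M.

Lemma pow_n_one_plus (x : C) n : pow_n (1 + x) n = 1 + x * csum (fun i => pow_n (1 + x) i) n.
Proof.
  induction n as [|n IH]; simpl; C_unfold; [ring|]. rewrite IH. ring.
Qed.

Lemma csum_pow_n_one_plus (x : C) n : csum (fun i => pow_n (1 + x) i) n =
  RtoC (INR n) + x * csum (fun i => csum (fun l => pow_n (1 + x) l) i) n.
Proof.
  induction n as [|n IH]; cbn [csum]; [simpl; ring|].
  rewrite pow_n_one_plus, IH, S_INR, RtoC_plus. ring.
Qed.

Lemma peval_p_geom2 M (w z : C) :
  peval (p_geom2 M) w z = csum (fun i => csum (fun l => pow_n (1 + z * w) l) i) M.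
Proof.
  unfold p_geom2. rewrite peval_psum. apply csum_ext. intros i _.
  rewrite peval_psum. apply csum_ext. intros l _. apply peval_ppow.
Qed.

Definition p_indicial_term (M : nat) (a : nat -> C) (om : C) (k : nat) : pexpr :=
  match k with
  | O => PCst 0
  | _ => PMul (PCst (a k)) (PMul (ppow (PEps (PCst 1)) (M - k - 1)) (p_falling om k))
  end.

Lemma peval_p_indicial_term M a (om w z : C) k : (k < M)%nat ->
  z * peval (p_indicial_term M a om k) w z
  = match k with O => 0 | _ => a k * pow_n z (M - k) * peval (p_falling om k) w z end.
Proof.
  intros Hk. destruct k as [|k]; cbn [p_indicial_term peval]; [ring|].
  rewrite peval_ppow. cbn [peval]. rewrite Cmult_1_r.
  set (j := (M - S k - 1)%nat). replace (M - S k)%nat with (S j) by (unfold j; lia).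
  cbn [pow_n]. C_unfold. ring.
Qed.

(* The indicial equation [indicial M a lambda = eps^-M] multiplied by [eps^M],
   with [1] subtracted, divided by [eps] and solved for the linear term [M w]. *)
Definition p_indicial_fix (M : nat) (a : nat -> C) (om : C) : pexpr :=
  PMul (PCst (- / RtoC (INR M)))
    (PAdd (PEps (PMul (PMul PVar PVar) (p_geom2 M)))
          (PAdd (p_falling_rem om M) (psum (p_indicial_term M a om) M))).

Lemma eps_guarded_p_indicial_fix M a om : eps_guarded (p_indicial_fix M a om).
Proof.
  assert (Hlam : eps_guarded (p_eps_lambda om)) by (simpl; auto).
  assert (Hfall : forall k, eps_guarded (p_falling om k)) by (induction k; simpl; auto).
  assert (Hrem : forall k, eps_guarded (p_falling_rem om k))
    by (induction k; simpl; repeat split; auto using eps_guarded_ppow).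
  unfold p_indicial_fix. cbn [eps_guarded]. repeat split; [apply Hrem|].
  apply eps_guarded_psum. intros [|k]; cbn [eps_guarded]; [exact I|].
  split; [exact I | split; [apply eps_guarded_ppow; exact I | apply Hfall]].
Qed.

Lemma p_indicial_fix_eq M a (om w z : C) : (1 <= M)%nat -> pow_n om M = RtoC 1 ->
  w = peval (p_indicial_fix M a om) w z ->
  peval (p_falling om M) w z
  + csum (fun k => match k with
                   | O => 0
                   | _ => a k * pow_n z (M - k) * peval (p_falling om k) w z
                   end) M = 1.
Proof.
  intros HM Hom Hfix.
  assert (HMnz : RtoC (INR M) <> 0)
    by (intros H; injection H as H; apply (not_0_INR M); [lia | exact H]).
  set (G := peval (p_geom2 M) w z).
  set (Rm := peval (p_falling_rem om M) w z).
  set (T := peval (psum (p_indicial_term M a om) M) w z).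
  assert (Hlin : RtoC (INR M) * w = - (z * (w * w * G) + (Rm + T))).
  { rewrite Hfix at 1. unfold p_indicial_fix. cbn [peval]. fold G Rm T. field. exact HMnz. }
  rewrite (csum_ext _ (fun k => z * peval (p_indicial_term M a om k) w z))
    by (intros k Hk; symmetry; apply peval_p_indicial_term, Hk).
  rewrite <- csum_mult_l, <- peval_psum. fold T.
  rewrite peval_p_falling_rem, pow_n_Cmult, Hom, pow_n_one_plus, csum_pow_n_one_plus. fold Rm.
  rewrite <- peval_p_geom2. fold G.
  transitivity (1 + z * (RtoC (INR M) * w + z * (w * w * G) + (Rm + T))); [C_unfold; ring|].
  rewrite Hlin. ring.
Qed.

Lemma indicial_eq_of_fix M a (om w z : C) : (1 <= M)%nat -> pow_n om M = RtoC 1 -> z <> 0 ->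
  w = peval (p_indicial_fix M a om) w z ->
  indicial M a (om * (1 + z * w) / z) = pow_n (/ z) M.
Proof.
  intros HM Hom Hz Hfix.
  set (l := om * (1 + z * w) / z).
  pose proof (p_indicial_fix_eq M a om w z HM Hom Hfix) as Heq.
  rewrite peval_p_falling in Heq by exact Hz. fold l in Heq.
  rewrite (csum_ext _ (fun k => pow_n z M * match k with O => 0 | _ => a k * falling l k end))
    in Heq.
  2:{ intros [|k] Hk; [ring|]. rewrite peval_p_falling by exact Hz. fold l.
      replace (pow_n z M) with (pow_n z (M - S k) * pow_n z (S k))
        by (rewrite <- (pow_n_plus (K := C_Ring)); f_equal; lia).
      C_unfold. ring. }
  rewrite <- csum_mult_l, <- Cmult_plus_distr_l, <- sum_n_m_csum in Heq by exact HM.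
  unfold indicial. rewrite pow_n_Cinv by exact Hz.
  pose proof (pow_n_neq0 z M Hz) as HzM.
  match goal with |- ?X = _ => transitivity (/ pow_n z M * (pow_n z M * X)) end.
  - field. exact HzM.
  - rewrite Heq. ring.
Qed.

Lemma Cdist_sep (d : R) (x y u v : C) : (d <= Cmod (x - y))%R ->
  (Cmod (u - x) < d / 2)%R -> (Cmod (v - y) < d / 2)%R -> u <> v.
Proof.
  intros Hxy Hu Hv ->.
  assert (Htri : (Cmod (x - y) <= Cmod (v - x) + Cmod (v - y))%R).
  { replace (x - y) with (- (v - x) + (v - y)) by ring.
    eapply Rle_trans; [apply Cmod_triangle|]. rewrite Cmod_opp. lra. }
  lra.
Qed.

Definition branch_fix (M : nat) (a : nat -> C) (j : nat) : pexpr :=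
  p_indicial_fix M a (root_unity M j).

Definition wkb_coef (M : nat) (a : nat -> C) (j : nat) : nat -> C :=
  pser (p_eps_lambda (root_unity M j)) (pfix (branch_fix M a j)).

Definition wkb_sum (M : nat) (a : nat -> C) (j : nat) (z : C) : C :=
  peval (p_eps_lambda (root_unity M j)) (CPSeries (pfix (branch_fix M a j)) z) z.

Lemma wkb_coef_0 M a j : wkb_coef M a j 0 = root_unity M j.
Proof. unfold wkb_coef. simpl. unfold seq_mul. rewrite sum_O. simpl. ring. Qed.

Definition wkb_branch_on (M : nat) (a : nat -> C) (d : R) (j : nat) (r : R) : Prop :=
  forall z, (Cmod z < r)%R ->
    is_pseries (wkb_coef M a j) z (wkb_sum M a j z) /\
    (z <> 0 -> indicial M a (wkb_sum M a j z / z) = pow_n (/ z) M) /\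
    (Cmod (wkb_sum M a j z - root_unity M j) < d)%R.

Lemma wkb_branch M a j (d : R) : (1 <= M)%nat -> (0 < d)%R ->
  exists r, (0 < r)%R /\ wkb_branch_on M a d j r.
Proof.
  intros HM Hd. set (p := branch_fix M a j).
  assert (Hg : eps_guarded p) by apply eps_guarded_p_indicial_fix.
  destruct (pfix_majorant p Hg) as [r0 [B [Hr0 [HB Hb]]]].
  set (r := Rmin r0 (d / (B + 1))).
  assert (Hr : (0 < r)%R) by (apply Rmin_pos; [exact Hr0 | apply Rdiv_lt_0_compat; lra]).
  exists r. split; [exact Hr|]. intros z Hz.
  assert (Hzr0 : (Cmod z <= r0)%R) by (pose proof (Rmin_l r0 (d / (B + 1))); fold r in H; lra).
  destruct (pfix_CPSeries p r0 B z Hg Hb Hzr0) as [HW [Hfix [HWB Hbz]]].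
  set (W := CPSeries (pfix p) z) in *.
  split; [|split].
  - exact (pser_pseries _ _ z W B Hbz HW).
  - intros Hz0.
    apply indicial_eq_of_fix; [exact HM | apply root_unity_pow; lia | exact Hz0 | exact Hfix].
  - unfold wkb_sum. fold p W. unfold p_eps_lambda. cbn [peval].
    replace (root_unity M j * (1 + z * W) - root_unity M j) with (root_unity M j * (z * W))
      by ring.
    rewrite !Cmod_mult, Cmod_root_unity, Rmult_1_l.
    assert (Hrd : (r * (B + 1) <= d)%R).
    { pose proof (Rmin_r r0 (d / (B + 1))) as H. fold r in H.
      apply (Rmult_le_compat_r (B + 1)) in H; [|lra].
      unfold Rdiv in H. rewrite Rmult_assoc, Rinv_l in H by lra. lra. }
    pose proof (Cmod_ge_0 z). pose proof (Cmod_ge_0 W). nra.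
Qed.

Lemma wkb_branches M a : (1 <= M)%nat -> exists r, (0 < r)%R /\
  (forall j (eps : C), (j < M)%nat -> (Cmod eps < r)%R ->
     is_pseries (wkb_coef M a j) eps (wkb_sum M a j eps)) /\
  (forall eps : C, eps <> 0 -> (Cmod eps < r)%R ->
    (forall j, (j < M)%nat -> indicial M a (wkb_sum M a j eps / eps) = pow_n (/ eps) M) /\
    (forall i j, (i < M)%nat -> (j < M)%nat ->
       wkb_sum M a i eps / eps = wkb_sum M a j eps / eps -> i = j)).
Proof.
  intros HM. destruct (root_unity_sep M) as [d [Hd Hsep]].
  destruct (ex_common_radius M (wkb_branch_on M a (d / 2))) as [r [Hr Hbr]].
  { intros j r r' Hr' Hj z Hz. apply Hj. lra. }
  { intros j _. apply wkb_branch; [exact HM | lra]. }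
  exists r. split; [exact Hr|]. split; [intros j eps Hj Heps; apply (Hbr j Hj eps Heps)|].
  intros eps Heps Hepsr. split; [intros j Hj; apply (Hbr j Hj eps Hepsr), Heps|].
  intros i j Hi Hj Hij. destruct (Nat.eq_dec i j) as [-> | Hne]; [reflexivity|]. exfalso.
  destruct (Hbr i Hi eps Hepsr) as [_ [_ Hdi]], (Hbr j Hj eps Hepsr) as [_ [_ Hdj]].
  apply (Cdist_sep d _ _ _ _ (Hsep i j Hi Hj Hne) Hdi Hdj).
  replace (wkb_sum M a i eps) with (wkb_sum M a i eps / eps * eps) by (field; exact Heps).
  rewrite Hij. field. exact Heps.
Qed.

Theorem theorem6 (M : nat) (a : nat -> C) (HM : (2 <= M)%nat) :
  exists (h : nat -> nat -> C) (s : nat -> C -> C) (r : R),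
    (0 < r)%R /\
    (* h_{j,0} are the M distinct M-th roots of unity *)
    (forall j, (j < M)%nat -> pow_n (h j 0%nat) M = RtoC 1) /\
    (forall i j, (i < M)%nat -> (j < M)%nat -> h i 0%nat = h j 0%nat -> i = j) /\
    (* the series sum_k h_{j,k} eps^k converge for |eps| < r, with sum s j eps *)
    (forall j (eps : C), (j < M)%nat -> (Cmod eps < r)%R ->
        @is_pseries C_AbsRing C_NormedModule (h j) eps (s j eps)) /\
    (* for eps in the punctured disc, eta = 1/eps, and any branch L of ln on an
       open set U, psi_j(z) = exp[(sum_k h_{j,k} eps^(k-1)) ln z] solve the
       equation on U and are linearly independent *)
    (forall (eps : C) (U : C -> Prop) (L : C -> C),
        eps <> 0 -> (Cmod eps < r)%R ->
        open U -> log_branch U L ->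
        let psi := fun j z =>
          cexp (s j eps / eps * L z) in
        (forall j, (j < M)%nat ->
           exists D : nat -> C -> C,
             derivs_on U M (psi j) D /\
             (forall z, U z -> euler_cauchy M a (/ eps) D z = RtoC 0)) /\
        ((exists z0, U z0) ->
         forall c : nat -> C,
           (forall z, U z -> sum_n (fun j => c j * psi j z) (M - 1) = RtoC 0) ->
           forall j, (j < M)%nat -> c j = RtoC 0)).
Proof.
  destruct (wkb_branches M a ltac:(lia)) as [r [Hr [Hser Hbr]]].
  exists (wkb_coef M a), (wkb_sum M a), r.
  split; [exact Hr|]. split; [|split; [|split; [exact Hser|]]].
  - intros j _. rewrite wkb_coef_0. apply root_unity_pow. lia.
  - intros i j Hi Hj. rewrite !wkb_coef_0. apply root_unity_inj; assumption.
  - intros eps U L Heps Hepsr HU HL psi. destruct (Hbr eps Heps Hepsr) as [Hind Hinj]. split.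
    + intros j Hj. exact (euler_cauchy_solution U L M a _ _ HL (Hind j Hj)).
    + intros [z0 Hz0] c Hc.
      apply (cexp_log_indep U L M (fun j => wkb_sum M a j eps / eps) c z0 HU HL Hz0 Hinj).
      intros z Hz. rewrite <- (Hc z Hz), sum_n_csum. replace (S (M - 1)) with M by lia.
      reflexivity.
Qed.
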